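(* Let $r\ge 3$ and $k\ge 2$ be integers and $n=2k\cdot 3^{r-1}$. Then there exists an $r$-regular word of length $n$ over a three-letter alphabet.
   Context: For a word $u=u_1\cdots u_m$ over an alphabet $\mathcal A$ with $b$ letters and an integer $r\ge -1$, $u$ is $r$-regular if for every $k=0,1,\dots,r$ the sum $\sum_{1\le t\le m,\ u_t=c} t^k$ is the same for all letters $c\in\mathcal A$ (a letter not occurring contributes $0$). Here $b=3$. *)

From mathcomp Require Import all_boot all_algebra.
Set Implicit Arguments. Unset Strict Implicit. Unset Printing Implicit Defensive.

Definition letter_pow_sum (A : eqType) (u : seq A) (c : A) (k : nat) : nat :=
  \sum_(0 <= i < size u | nth c u i == c) (i.+1) ^ k.

(* u is r-regular over the finite alphabet A (r given as an integer >= -1;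
   r = -1 imposes no condition). *)
Definition regular (A : finType) (r : int) (u : seq A) : Prop :=
  forall k : nat, (Posz k <= r)%R ->
    forall c c' : A, letter_pow_sum u c k = letter_pow_sum u c' k.

From mathcomp Require Import all_boot all_algebra.
From mathcomp Require Import zify.

Set Implicit Arguments.
Unset Strict Implicit.
Unset Printing Implicit Defensive.

(* The proof rests on the Prouhet construction.  Shifting every position of
   a word v by m changes the degree-j power sum of a letter by lower-degree
   power sums of v (binomial expansion, [lps_cat]); hence, when all pieces
   of a concatenation are s-regular, the degree-(s+1) power sum of the
   concatenation differs from the sum of the pieces' power sums by a
   letter-independent quantity ([lps_flatten_balance]).  Over the alphabet
   Z/bZ, concatenating the b cyclic relabellings w, w+1, ..., w+(b-1) of an
   s-regular word w adds up, for every letter, the power sums of all letters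
   of w: the result is (s+1)-regular and b times longer
   ([regular_upto_prouhet]).
   Iterating from two explicit ternary seeds, a 1-regular word of length 6 and
   a 3-regular word of length 36, gives r-regular words of lengths
   6*3^(r-1) and 4*3^(r-1); since regularity is preserved by concatenation
   and every k >= 2 is 2a + 3b, concatenating a copies of the second and b
   copies of the first yields the theorem. *)

Local Notation lps := letter_pow_sum.

Section PowerSums.
Variable A : eqType.
Implicit Types (u v : seq A) (ws : seq (seq A)) (c : A).

Definition regular_upto (s : nat) (u : seq A) : Prop :=
  forall j, j <= s -> forall c c', lps u c j = lps u c' j.

(* Contribution of shifting the positions of v by m to its degree-j sums,
   beyond lps v c j itself: \sum_(l < j) C(j,l) m^(j-l) lps v c l. *)
Definition shift_sum (m : nat) (v : seq A) (c : A) (j : nat) : nat :=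
  \sum_(l < j) 'C(j, l) * (m ^ (j - l) * lps v c l).

Lemma lps_nil c j : lps [::] c j = 0.
Proof. by rewrite /letter_pow_sum big_geq. Qed.

(* Binomial expansion of (size u + t)^j over the positions t of v. *)
Lemma lps_cat u v c j :
  lps (u ++ v) c j = lps u c j + lps v c j + shift_sum (size u) v c j.
Proof.
rewrite /letter_pow_sum size_cat (@big_cat_nat _ _ _ (size u)) ?leq_addr //.
rewrite -addnA; congr (_ + _).
  by apply: congr_big_nat => // i /andP [_ Hi]; rewrite nth_cat Hi.
rewrite -{1}(add0n (size u)) big_addn addKn.
under eq_big => [i | i _].
- by rewrite nth_cat ltnNge leq_addl /= addnK over.
- by rewrite -addSn addnC expnDn big_ord_recr /= binn subnn expn0 !mul1n over.
rewrite big_split addnC /shift_sum /=; congr (_ + _).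
by rewrite exchange_big; apply: eq_bigr => l _; rewrite !big_distrr.
Qed.

Lemma lps_map (f g : A -> A) : cancel f g -> cancel g f ->
  forall u c j, lps (map f u) c j = lps u (g c) j.
Proof.
move=> fK gK u c j; rewrite /letter_pow_sum size_map.
apply: congr_big_nat => // i /andP [_ Hi].
by rewrite (nth_map (g c)) // (can2_eq fK gK).
Qed.

(* The shift contribution only involves degrees < j, so it is
   letter-independent for an s-regular word as soon as j <= s + 1. *)
Lemma shift_sum_regular s m v c c' j :
  regular_upto s v -> j <= s.+1 -> shift_sum m v c j = shift_sum m v c' j.
Proof.
move=> reg_v le_js; apply: eq_bigr => l _.
by rewrite (reg_v l _ c c') // -ltnS (leq_trans (ltn_ord l)).
Qed.

Lemma regular_upto_cat s u v :
  regular_upto s u -> regular_upto s v -> regular_upto s (u ++ v).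
Proof.
move=> reg_u reg_v j le_js c c'; rewrite !lps_cat (reg_u j le_js c c').
by rewrite (reg_v j le_js c c') (shift_sum_regular _ c c' reg_v (leqW le_js)).
Qed.

Lemma regular_upto_flatten s ws :
  (forall v, v \in ws -> regular_upto s v) -> regular_upto s (flatten ws).
Proof.
elim: ws => [_ j _ c c' | v ws IHws reg_ws] /=; first by rewrite !lps_nil.
apply: regular_upto_cat; first exact/reg_ws/mem_head.
by apply: IHws => w w_ws; apply/reg_ws; rewrite inE w_ws orbT.
Qed.

Lemma regular_upto_map s (f g : A -> A) u : cancel f g -> cancel g f ->
  regular_upto s u -> regular_upto s (map f u).
Proof.
by move=> fK gK reg_u j le_js c c'; rewrite !(lps_map fK gK); apply: reg_u.
Qed.

(* Up to a letter-independent term, the degree-(s+1) power sums of a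
   concatenation of s-regular words are the sums of those of the pieces;
   stated in the subtraction-free form a(c) + b(c') = a(c') + b(c). *)
Lemma lps_flatten_balance s ws c c' j :
  (forall v, v \in ws -> regular_upto s v) -> j <= s.+1 ->
  lps (flatten ws) c j + \sum_(v <- ws) lps v c' j =
  lps (flatten ws) c' j + \sum_(v <- ws) lps v c j.
Proof.
move=> reg_ws le_js; elim: ws reg_ws => [|v ws IHws] reg_ws /=.
  by rewrite !lps_nil !big_nil.
have reg_tail w : w \in ws -> regular_upto s w.
  by move=> w_ws; apply/reg_ws; rewrite inE w_ws orbT.
have := IHws reg_tail; rewrite !big_cons !lps_cat.
rewrite (shift_sum_regular _ c c' (regular_upto_flatten reg_tail) le_js).
lia.
Qed.

End PowerSums.

Section Prouhet.
Variable n : nat.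
Local Notation letter := 'I_n.+1.

Definition prouhet (w : seq letter) : seq letter :=
  flatten [seq map (fun x => x + i)%R w | i <- enum letter].

Lemma size_prouhet w : size (prouhet w) = n.+1 * size w.
Proof.
rewrite size_flatten /shape -map_comp sumnE big_map big_enum /=.
by under eq_bigr => i _ do rewrite size_map; rewrite sum_nat_const card_ord.
Qed.

Lemma lps_shift (i : letter) w c j :
  lps (map (fun x => x + i)%R w) c j = lps w (c - i)%R j.
Proof.
by apply: (lps_map (g := fun x => x - i)%R) => x;
  rewrite ?GRing.addrK ?GRing.subrK.
Qed.

Lemma sum_lps_shifts w c j :
  \sum_(i : letter) lps (map (fun x => x + i)%R w) c j =
  \sum_(d : letter) lps w d j.
Proof.
under eq_bigr => i _ do rewrite lps_shift.
by rewrite [RHS](reindex_inj (@GRing.subrI _ c)).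
Qed.

(* The
   pieces are s-regular, and by [sum_lps_shifts] the sum of their degree-j
   power sums at c does not depend on c, so [lps_flatten_balance] applies. *)
Lemma regular_upto_prouhet s w :
  regular_upto s w -> regular_upto s.+1 (prouhet w).
Proof.
move=> reg_w j le_js c c'.
have reg_shifts v : v \in [seq map (fun x => x + i)%R w | i <- enum letter] ->
    regular_upto s v.
  case/mapP=> i _ ->; apply: (regular_upto_map (g := fun x => x - i)%R) => // x.
  - exact: GRing.addrK.
  - exact: GRing.subrK.
have := lps_flatten_balance c c' reg_shifts le_js.
by rewrite !big_map -!enumT !big_enum /= !sum_lps_shifts => /addIn.
Qed.

Lemma regular_upto_iter_prouhet s m w :
  regular_upto s w -> regular_upto (s + m) (iter m prouhet w).
Proof.
move=> reg_w; elim: m => [|m IHm] /=; first by rewrite addn0.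
by rewrite addnS; apply: regular_upto_prouhet.
Qed.

Lemma size_iter_prouhet m w : size (iter m prouhet w) = n.+1 ^ m * size w.
Proof.
by elim: m => [|m IHm] /=; rewrite ?mul1n // size_prouhet IHm expnS mulnA.
Qed.

End Prouhet.

Lemma regular_upto_check (A : eqType) (cs : seq A) (c0 : A) s (u : seq A) :
  (forall c, c \in cs) ->
  all (fun j => all (fun c => lps u c j == lps u c0 j) cs) (iota 0 s.+1) ->
  regular_upto s u.
Proof.
move=> all_cs /allP check j le_js c c'.
have /allP check_j : all (fun c => lps u c j == lps u c0 j) cs.
  by apply: check; rewrite mem_iota.
by rewrite (eqP (check_j c (all_cs c))) (eqP (check_j c' (all_cs c'))).
Qed.

Lemma regular_of_regular_upto (A : finType) s (u : seq A) :
  regular_upto s u -> regular (Posz s) u.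
Proof. by move=> reg_u j; rewrite lez_nat; apply: reg_u. Qed.

Lemma size_flatten_nseq (T : Type) a (u : seq T) :
  size (flatten (nseq a u)) = a * size u.
Proof. by rewrite size_flatten /shape map_nseq sumn_nseq mulnC. Qed.

Lemma regular_upto_flatten_nseq (A : eqType) s a (u : seq A) :
  regular_upto s u -> regular_upto s (flatten (nseq a u)).
Proof.
move=> reg_u; apply: regular_upto_flatten => v.
by rewrite mem_nseq => /andP [_ /eqP ->].
Qed.

(* The ternary letter i mod 3.  Unlike [inord], its value is computed without
   going through an opaque proof, so words built from it evaluate. *)
Definition ord3 (i : nat) : 'I_3 := Ordinal (ltn_pmod i (isT : 0 < 3)).

Lemma mem_ord3 (c : 'I_3) : c \in [seq ord3 i | i <- iota 0 3].
Proof.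
apply/mapP; exists (val c); first by rewrite mem_iota ltn_ord.
by apply: val_inj; rewrite /= modn_small.
Qed.

Definition seed6 : seq 'I_3 := [seq ord3 i | i <- [:: 0; 1; 2; 2; 1; 0]].

Definition seed36 : seq 'I_3 := [seq ord3 i | i <-
  [:: 1; 2; 0; 0; 1; 2; 2; 0; 2; 1; 0; 1; 0; 1; 1; 2; 2; 0;
      0; 1; 1; 2; 2; 0; 2; 0; 2; 1; 0; 1; 1; 2; 0; 0; 1; 2]].

Lemma regular_seed6 : regular_upto 1 seed6.
Proof.
apply: (@regular_upto_check _ _ (ord3 0) 1 seed6 mem_ord3).
by rewrite /letter_pow_sum unlock; vm_compute.
Qed.

Lemma regular_seed36 : regular_upto 3 seed36.
Proof.
apply: (@regular_upto_check _ _ (ord3 0) 3 seed36 mem_ord3).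
by rewrite /letter_pow_sum unlock; vm_compute.
Qed.

Lemma two_three_decomposition k : 2 <= k -> exists a b, k = 2 * a + 3 * b.
Proof.
exists ((k - 3 * odd k) %/ 2), (odd k).
by have := odd_double_half k; case: (odd k); lia.
Qed.

Theorem mainTheorem13 (r k : nat) (hr : 3 <= r) (hk : 2 <= k) :
  exists u : seq 'I_3,
    size u = (2 * k * 3 ^ (r - 1))%N /\ regular (Posz r) u.
Proof.
have [a [b ->]] := two_three_decomposition hk.
pose u36 := iter (r - 3) (@prouhet 2) seed36.
pose u6 := iter (r - 1) (@prouhet 2) seed6.
have reg36 : regular_upto r u36.
  have := regular_upto_iter_prouhet (m := r - 3) regular_seed36.
  by rewrite subnKC.
have reg6 : regular_upto r u6.
  have := regular_upto_iter_prouhet (m := r - 1) regular_seed6.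
  by rewrite subnKC ?(ltnW (ltnW hr)).
exists (flatten (nseq a u36) ++ flatten (nseq b u6)); split.
  rewrite size_cat !size_flatten_nseq !size_iter_prouhet.
  have -> : r - 1 = (r - 3).+2 by lia.
  rewrite !expnS /=; lia.
apply/regular_of_regular_upto/regular_upto_cat;
  exact: regular_upto_flatten_nseq.
Qed.
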